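(* Let $F:\mathcal{C}\to\mathcal{D}$ be left adjoint to $G:\mathcal{D}\to\mathcal{C}$, with unit $\eta:1_{\mathcal{C}}\to GF$ and counit $\varepsilon:FG\to 1_{\mathcal{D}}$. 1. $F$ is naturally full if and only if there exists a natural transformation $\nu:GF\to 1_{\mathcal{C}}$ such that $\eta_C\circ\nu_C=\mathrm{id}_{GFC}$ for all $C\in\mathcal{C}$. In this case, $\varepsilon_{FC}$ is an isomorphism in $\mathcal{D}$ with inverse $F(\eta_C)$, for every $C\in\mathcal{C}$. 2. $G$ is naturally full if and only if there exists a natural transformation $\xi:1_{\mathcal{D}}\to FG$ such that $\xi_D\circ\varepsilon_D=\mathrm{id}_{FGD}$ for all $D\in\mathcal{D}$. In this case, $G(\varepsilon_D)$ is an isomorphism in $\mathcal{C}$ with inverse $\eta_{GD}$, for every $D\in\mathcal{D}$.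
   Context: For a functor $F:\mathcal{A}\to\mathcal{B}$, let $\mathcal{F}:\mathrm{Hom}_{\mathcal{A}}(\bullet,\bullet)\to\mathrm{Hom}_{\mathcal{B}}(F(\bullet),F(\bullet))$, $\mathcal{F}_{A,A'}(f)=F(f)$. $F$ is called naturally full if there is a natural transformation $\mathcal{P}:\mathrm{Hom}_{\mathcal{B}}(F(\bullet),F(\bullet))\to\mathrm{Hom}_{\mathcal{A}}(\bullet,\bullet)$ (natural in both variables: $\mathcal{P}_{X,T}(F(h)\circ g\circ F(f))=h\circ\mathcal{P}_{Y,Z}(g)\circ f$) such that $F(\mathcal{P}_{A,A'}(u))=u$ for all $A,A'$ and all $u:F(A)\to F(A')$. *)

(* Composition: comp g f = g o f. *)

Set Implicit Arguments.

Record Category := {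
  Ob :> Type;
  Hom : Ob -> Ob -> Type;
  comp : forall {A B C : Ob}, Hom B C -> Hom A B -> Hom A C;
  idm : forall A : Ob, Hom A A;
  comp_assoc : forall (A B C D : Ob) (h : Hom C D) (g : Hom B C) (f : Hom A B),
      comp h (comp g f) = comp (comp h g) f;
  comp_id_l : forall (A B : Ob) (f : Hom A B), comp (idm B) f = f;
  comp_id_r : forall (A B : Ob) (f : Hom A B), comp f (idm A) = f
}.

Arguments Hom {c} _ _.
Arguments comp {c A B C} _ _.
Arguments idm {c} _.

Record Functor (C D : Category) := {
  fobj :> Ob C -> Ob D;
  fmap : forall {A B : Ob C}, Hom A B -> Hom (fobj A) (fobj B);
  fmap_id : forall A : Ob C, fmap (idm A) = idm (fobj A);
  fmap_comp : forall (A B E : Ob C) (g : Hom B E) (f : Hom A B),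
      fmap (comp g f) = comp (fmap g) (fmap f)
}.

Arguments fmap {C D} _ {A B} _.

Definition is_natural {C D : Category} (F G : Functor C D)
  (alpha : forall X : Ob C, Hom (F X) (G X)) : Prop :=
  forall (X Y : Ob C) (f : Hom X Y),
    comp (alpha Y) (fmap F f) = comp (fmap G f) (alpha X).

(* F is naturally full: there is a natural (in both variables) section
   P of the map Hom(A,A') -> Hom(FA,FA'), f |-> F f. *)
Definition naturally_full {C D : Category} (F : Functor C D) : Prop :=
  exists P : forall A A' : Ob C, Hom (F A) (F A') -> Hom A A',
    (forall (X Y Z T : Ob C) (f : Hom X Y) (g : Hom (F Y) (F Z)) (h : Hom Z T),
        P X T (comp (fmap F h) (comp g (fmap F f))) = comp h (comp (P Y Z g) f))
    /\ (forall (A A' : Ob C) (u : Hom (F A) (F A')), fmap F (P A A' u) = u).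

Definition is_adjunction {C D : Category} (F : Functor C D) (G : Functor D C)
  (eta : forall X : Ob C, Hom X (G (F X)))
  (eps : forall Y : Ob D, Hom (F (G Y)) Y) : Prop :=
  (forall (X X' : Ob C) (f : Hom X X'),
      comp (eta X') f = comp (fmap G (fmap F f)) (eta X))
  /\ (forall (Y Y' : Ob D) (g : Hom Y Y'),
      comp (eps Y') (fmap F (fmap G g)) = comp g (eps Y))
  /\ (forall X : Ob C, comp (eps (F X)) (fmap F (eta X)) = idm (F X))
  /\ (forall Y : Ob D, comp (fmap G (eps Y)) (eta (G Y)) = idm (G Y)).


Set Implicit Arguments.

(* F is naturally full exactly when the unit has a natural retraction nu:
   given a natural section P of F, take nu_X := P(eps_{FX}); given nu, take
   P(u) := nu ∘ G u ∘ eta. The pivot is that any retraction of eta_X is sent by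
   F to eps_{FX} (triangle identity), which also makes F(eta_X) a two-sided
   inverse of eps_{FX}. Part 2 is the dual statement, obtained by applying
   part 1 to the adjunction G^op -| F^op between opposite categories. *)

Definition unit_retraction {C D : Category} (F : Functor C D) (G : Functor D C)
  (eta : forall X : Ob C, Hom X (G (F X))) : Prop :=
  exists nu : forall X : Ob C, Hom (G (F X)) X,
    (forall (X X' : Ob C) (f : Hom X X'),
       comp (nu X') (fmap G (fmap F f)) = comp f (nu X))
    /\ (forall X : Ob C, comp (eta X) (nu X) = idm (G (F X))).

Definition counit_section {C D : Category} (F : Functor C D) (G : Functor D C)
  (eps : forall Y : Ob D, Hom (F (G Y)) Y) : Prop :=
  exists xi : forall Y : Ob D, Hom Y (F (G Y)),
    (forall (Y Y' : Ob D) (g : Hom Y Y'),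
       comp (xi Y') g = comp (fmap F (fmap G g)) (xi Y))
    /\ (forall Y : Ob D, comp (xi Y) (eps Y) = idm (F (G Y))).

Section LeftAdjoint.

Variables (C D : Category) (F : Functor C D) (G : Functor D C)
  (eta : forall X : Ob C, Hom X (G (F X)))
  (eps : forall Y : Ob D, Hom (F (G Y)) Y).
Hypothesis adj : is_adjunction F G eta eps.

Lemma fmap_unit_retraction {X : Ob C} {n : Hom (G (F X)) X} :
  comp (eta X) n = idm (G (F X)) -> fmap F n = eps (F X).
Proof.
  intros n_retraction.
  destruct adj as (_ & _ & triF & _).
  transitivity (comp (eps (F X)) (fmap F (comp (eta X) n))).
  - rewrite fmap_comp, comp_assoc, triF, comp_id_l. reflexivity.
  - rewrite n_retraction, fmap_id, comp_id_r. reflexivity.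
Qed.

Lemma naturally_full_unit_retraction :
  naturally_full F -> unit_retraction F G eta.
Proof.
  intros [P [P_natural P_section]].
  destruct adj as (eta_natural & eps_natural & _ & triG).
  exists (fun X => P (G (F X)) X (eps (F X))). split.
  - intros X X' f.
    pose proof (P_natural _ _ _ _ (fmap G (fmap F f)) (eps (F X')) (idm X'))
      as P_pre.
    pose proof (P_natural _ _ _ _ (idm (G (F X))) (eps (F X)) f) as P_post.
    rewrite fmap_id, !comp_id_l, eps_natural in P_pre.
    rewrite fmap_id, !comp_id_r in P_post.
    rewrite <- P_pre. exact P_post.
  - intros X. rewrite eta_natural, P_section. apply triG.
Qed.

Lemma unit_retraction_naturally_full :
  unit_retraction F G eta -> naturally_full F.
Proof.
  intros [nu [nu_natural nu_retraction]].
  destruct adj as (eta_natural & eps_natural & triF & _).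
  exists (fun A A' u => comp (nu A') (comp (fmap G u) (eta A))). split.
  - intros X Y Z T f g h.
    rewrite !fmap_comp, !comp_assoc, nu_natural, <- !comp_assoc.
    do 4 f_equal. symmetry. apply eta_natural.
  - intros A A' u.
    rewrite !fmap_comp, (fmap_unit_retraction (nu_retraction A')),
      comp_assoc, eps_natural, <- comp_assoc, triF, comp_id_r.
    reflexivity.
Qed.

Lemma left_adjoint_naturally_full_iff :
  naturally_full F <-> unit_retraction F G eta.
Proof.
  split; [apply naturally_full_unit_retraction | apply unit_retraction_naturally_full].
Qed.

Lemma unit_retraction_counit_inverse :
  unit_retraction F G eta ->
  forall X : Ob C, comp (fmap F (eta X)) (eps (F X)) = idm (F (G (F X))).
Proof.
  intros [nu [_ nu_retraction]] X.
  rewrite <- (fmap_unit_retraction (nu_retraction X)), <- fmap_comp,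
    nu_retraction, fmap_id.
  reflexivity.
Qed.

End LeftAdjoint.

Definition opposite (C : Category) : Category := {|
  Ob := Ob C;
  Hom := fun A B => @Hom C B A;
  comp := fun A B E g f => comp f g;
  idm := @idm C;
  comp_assoc := fun A B E D h g f => eq_sym (comp_assoc C D E B A f g h);
  comp_id_l := fun A B f => comp_id_r C B A f;
  comp_id_r := fun A B f => comp_id_l C B A f
|}.

Definition opposite_functor {C D : Category} (F : Functor C D) :
  Functor (opposite C) (opposite D) :=
  Build_Functor (opposite C) (opposite D) F
    (fun A B f => fmap F f) (fmap_id F)
    (fun A B E g f => fmap_comp F E B A f g).

Lemma opposite_adjunction {C D : Category} (F : Functor C D) (G : Functor D C)
  (eta : forall X : Ob C, Hom X (G (F X)))
  (eps : forall Y : Ob D, Hom (F (G Y)) Y) :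
  is_adjunction F G eta eps ->
  is_adjunction (opposite_functor G) (opposite_functor F) eps eta.
Proof.
  intros (eta_natural & eps_natural & triF & triG).
  split; [| split; [| split]]; simpl.
  - intros Y Y' g. symmetry. apply eps_natural.
  - intros X X' f. symmetry. apply eta_natural.
  - exact triG.
  - exact triF.
Qed.

Lemma naturally_full_opposite {C D : Category} (F : Functor C D) :
  naturally_full (opposite_functor F) <-> naturally_full F.
Proof.
  split; intros [P [P_natural P_section]];
    exists (fun A A' u => P A' A u); simpl in *.
  - split; [| intros A A' u; apply P_section].
    intros X Y Z T f g h. rewrite !comp_assoc. apply P_natural.
  - split; [| intros A A' u; apply P_section].
    intros X Y Z T f g h. rewrite <- !comp_assoc. apply P_natural.
Qed.

Lemma unit_retraction_opposite {C D : Category} (F : Functor C D)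
  (G : Functor D C) (eps : forall Y : Ob D, Hom (F (G Y)) Y) :
  unit_retraction (opposite_functor G) (opposite_functor F) eps
  <-> counit_section F G eps.
Proof.
  split; intros [xi [xi_natural xi_section]]; exists xi;
    split; try exact xi_section; intros Y Y' g; symmetry; apply xi_natural.
Qed.

Lemma right_adjoint_naturally_full_iff {C D : Category} (F : Functor C D)
  (G : Functor D C) (eta : forall X : Ob C, Hom X (G (F X)))
  (eps : forall Y : Ob D, Hom (F (G Y)) Y) :
  is_adjunction F G eta eps ->
  (naturally_full G <-> counit_section F G eps).
Proof.
  intros adj.
  pose proof (left_adjoint_naturally_full_iff (opposite_adjunction adj))
    as opposite_iff.
  split; intros H.
  - apply unit_retraction_opposite, opposite_iff, naturally_full_opposite, H.
  - apply naturally_full_opposite, opposite_iff, unit_retraction_opposite, H.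
Qed.

Theorem theorem2p6 (C D : Category) (F : Functor C D) (G : Functor D C)
  (eta : forall X : Ob C, Hom X (G (F X)))
  (eps : forall Y : Ob D, Hom (F (G Y)) Y)
  (adj : is_adjunction F G eta eps) :
  (* Part 1 *)
  ((naturally_full F <->
     exists nu : forall X : Ob C, Hom (G (F X)) X,
       (forall (X X' : Ob C) (f : Hom X X'),
          comp (nu X') (fmap G (fmap F f)) = comp f (nu X))
       /\ (forall X : Ob C, comp (eta X) (nu X) = idm (G (F X))))
   /\ (naturally_full F ->
       forall X : Ob C,
         comp (eps (F X)) (fmap F (eta X)) = idm (F X)
         /\ comp (fmap F (eta X)) (eps (F X)) = idm (F (G (F X)))))
  /\
  (* Part 2 *)
  ((naturally_full G <->
     exists xi : forall Y : Ob D, Hom Y (F (G Y)),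
       (forall (Y Y' : Ob D) (g : Hom Y Y'),
          comp (xi Y') g = comp (fmap F (fmap G g)) (xi Y))
       /\ (forall Y : Ob D, comp (xi Y) (eps Y) = idm (F (G Y))))
   /\ (naturally_full G ->
       forall Y : Ob D,
         comp (fmap G (eps Y)) (eta (G Y)) = idm (G Y)
         /\ comp (eta (G Y)) (fmap G (eps Y)) = idm (G (F (G Y))))).
Proof.
  pose proof adj as (_ & _ & triF & triG).
  pose proof (left_adjoint_naturally_full_iff adj) as F_full_iff.
  pose proof (right_adjoint_naturally_full_iff adj) as G_full_iff.
  split; split; try assumption.
  - intros F_full X. split; [apply triF |].
    exact (unit_retraction_counit_inverse adj (proj1 F_full_iff F_full) X).
  - intros G_full Y. split; [apply triG |].
    apply (unit_retraction_counit_inverse (opposite_adjunction adj)).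
    apply unit_retraction_opposite, G_full_iff, G_full.
Qed.
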